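(* Let $\epsilon>0$, $\delta\ge 0$, $n\ge1$, let $(\mathscr X,\mathscr B)$ be a measurable space, and let $\{\mu_i\}_{i\in I}$ be a set of exchangeable distributions on $\mathscr X^n$. Let $\phi:\mathscr X^n\to[0,1]$ be measurable and satisfy, for all $\underline X,\underline X'\in\mathscr X^n$ with $\delta(\underline X,\underline X')=1$, $$\phi_{\underline X}\le e^\epsilon\phi_{\underline X'}+\delta\quad\text{and}\quad 1-\phi_{\underline X}\le e^\epsilon(1-\phi_{\underline X'})+\delta. \qquad ( * )$$ Define $\phi':\mathscr X^n\to[0,1]$ by $\phi'_{\underline X}=\frac1{n!}\sum_{\pi\in\sigma(n)}\phi_{\pi(\underline X)}$, where $\sigma(n)$ is the symmetric group on $n$ letters acting by permuting coordinates. Then $\phi'$ satisfies $( * )$, $\int\phi'_{\underline X}\,d\mu_i=\int\phi_{\underline X}\,d\mu_i$ for all $i\in I$, and $\phi'$ depends on $\underline X$ only through its empirical distribution $\mathbb P_n$.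
   Context: The Hamming distance on $\mathscr X^n$ is $\delta(\underline X,\underline X')=\#\{i:X_i\ne X'_i\}$. A distribution on $\mathscr X^n$ is exchangeable if it is invariant under permutations of coordinates. The empirical distribution of $\underline X=(X_1,\dots,X_n)$ is $\mathbb P_n(B)=\frac1n\sum_{i=1}^n I_B(X_i)$ for measurable $B\subseteq\mathscr X$; it determines $\underline X$ up to permutation. *)

From HB Require Import structures.
From mathcomp Require Import all_boot all_order all_algebra all_fingroup.
From mathcomp Require Import all_classical all_reals all_analysis.
Set Implicit Arguments. Unset Strict Implicit. Unset Printing Implicit Defensive.
Import Order.TTheory GRing.Theory Num.Theory.
Local Open Scope classical_set_scope.
Local Open Scope ring_scope.

(* X^n is modelled by n.-tuple X, with the product sigma-algebra that
   MathComp-Analysis puts on tuples (generated by the coordinate maps). *)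

Definition hamming {X : Type} {n : nat} (x x' : n.-tuple X) : nat :=
  #|[set i : 'I_n | `[< tnth x i <> tnth x' i >]]|.

Definition perm_tuple {X : Type} {n : nat} (s : 'S_n) (x : n.-tuple X)
  : n.-tuple X := [tuple tnth x (s i) | i < n].

Definition exchangeable {d} {X : measurableType d} {R : realType} {n : nat}
  (mu : probability (n.-tuple X) R) : Prop :=
  forall (s : 'S_n) (A : set (n.-tuple X)), measurable A ->
    mu (perm_tuple s @^-1` A) = mu A.

Definition empirical {X : Type} {R : realType} {n : nat} (x : n.-tuple X)
  (B : set X) : R :=
  n%:R^-1 * \sum_(i < n) (\1_B (tnth x i) : R).

Definition dp_condition {X : Type} {R : realType} {n : nat}
  (eps delta : R) (phi : n.-tuple X -> R) : Prop :=
  forall x x' : n.-tuple X, hamming x x' = 1%N ->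
    phi x <= expR eps * phi x' + delta /\
    1 - phi x <= expR eps * (1 - phi x') + delta.

Definition symmetrize {X : Type} {R : realType} {n : nat}
  (phi : n.-tuple X -> R) (x : n.-tuple X) : R :=
  (n`!)%:R^-1 * \sum_(s : 'S_n) phi (perm_tuple s x).

From HB Require Import structures.
From mathcomp Require Import all_boot all_order all_algebra all_fingroup.
From mathcomp Require Import all_classical all_reals all_analysis.
From mathcomp Require Import measurable_realfun.
Import Order.TTheory GRing.Theory Num.Theory.
Local Open Scope classical_set_scope.
Local Open Scope ring_scope.

(* Averaging over the symmetric group preserves both inequalities of
   [dp_condition], because permuting both arguments by the same pi keeps
   them at Hamming distance 1, and it preserves the integral against an
   exchangeable law, because each phi o pi has the same integral as phi.
   The empirical distribution determines X only up to a permutation and up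
   to replacing coordinates by points that no measurable set separates from
   them; a measurable phi cannot tell such points apart, so the average over
   all permutations only depends on the empirical distribution. *)

Section Mean.
Context {R : realType} {T : finType}.

Definition mean (f : T -> R) : R := #|T|%:R^-1 * \sum_t f t.

Lemma mean_le (f g : T -> R) : (forall t, f t <= g t) -> mean f <= mean g.
Proof. by move=> fg; rewrite ler_wpM2l ?invr_ge0 ?ler0n // ler_sum. Qed.

Hypothesis T_gt0 : (0 < #|T|)%N.

Lemma mean_cst (c : R) : mean (fun=> c) = c.
Proof.
rewrite /mean sumr_const -[c *+ _]mulr_natl mulrA mulVf ?mul1r //.
by rewrite pnatr_eq0 -lt0n.
Qed.

Lemma mean_affine (a b : R) (f : T -> R) :
  mean (fun t => a * f t + b) = a * mean f + b.
Proof.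
rewrite /mean big_split -mulr_sumr mulrDr mulrCA -/(mean _).
by rewrite -[X in _ + X]/(mean (fun=> b)) mean_cst.
Qed.

End Mean.

Section Symmetrize.
Context {X : Type} {R : realType} {n : nat}.
Implicit Types (phi : n.-tuple X -> R) (x : n.-tuple X) (s t : 'S_n).

Lemma tnth_perm_tuple s x i : tnth (perm_tuple s x) i = tnth x (s i).
Proof. exact: tnth_mktuple. Qed.

Lemma perm_tupleM s t x :
  perm_tuple s (perm_tuple t x) = perm_tuple (s * t) x.
Proof. by apply: eq_from_tnth => i; rewrite !tnth_perm_tuple permM. Qed.

Lemma hammingE (x x' : n.-tuple X) :
  hamming x x' = #|[set i | `[< tnth x i <> tnth x' i >]]%SET|.
Proof.
by apply: eq_card => i; rewrite inE; apply/idP/idP => [/set_mem|/mem_set].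
Qed.

Lemma hamming_perm_tuple s (x x' : n.-tuple X) :
  hamming (perm_tuple s x) (perm_tuple s x') = hamming x x'.
Proof.
rewrite !hammingE -[RHS](card_preimset _ (@perm_inj _ s)).
by apply: eq_card => i; rewrite !inE !tnth_perm_tuple.
Qed.

Lemma card_Sn_gt0 : (0 < #|'S_n|)%N.
Proof. by rewrite card_Sn fact_gt0. Qed.

Lemma symmetrizeE phi x :
  symmetrize phi x = mean (fun s => phi (perm_tuple s x)).
Proof. by rewrite /mean card_Sn. Qed.

Lemma symmetrize_perm_tuple phi t x :
  symmetrize phi (perm_tuple t x) = symmetrize phi x.
Proof.
rewrite /symmetrize; congr (_ * _); under eq_bigr do rewrite perm_tupleM.
by rewrite [RHS](reindex_inj (mulIg t)).
Qed.

Lemma symmetrize_1B phi x :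
  1 - symmetrize phi x = symmetrize (fun y => 1 - phi y) x.
Proof.
rewrite !symmetrizeE; have -> : (fun s => 1 - phi (perm_tuple s x)) =
                              (fun s => -1 * phi (perm_tuple s x) + 1).
  by apply/funext => s; rewrite mulN1r addrC.
by rewrite mean_affine ?card_Sn_gt0 // mulN1r addrC.
Qed.

Lemma symmetrize_le_affine phi x x' (a b : R) :
  (forall s, phi (perm_tuple s x) <= a * phi (perm_tuple s x') + b) ->
  symmetrize phi x <= a * symmetrize phi x' + b.
Proof.
by move=> le; rewrite !symmetrizeE -mean_affine ?card_Sn_gt0 // mean_le.
Qed.

Lemma symmetrize_in01 phi : (forall y, 0 <= phi y <= 1) ->
  forall x, 0 <= symmetrize phi x <= 1.
Proof.
move=> phi01 x; rewrite symmetrizeE.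
rewrite -[0](mean_cst card_Sn_gt0) -[1](mean_cst card_Sn_gt0).
by rewrite !mean_le // => s; case/andP: (phi01 (perm_tuple s x)).
Qed.

Lemma dp_condition_symmetrize (eps delta : R) phi :
  dp_condition eps delta phi -> dp_condition eps delta (symmetrize phi).
Proof.
move=> dp x x' xx'.
have dps s := dp _ _ (etrans (hamming_perm_tuple s x x') xx').
split; first by apply: symmetrize_le_affine => s; case: (dps s).
by rewrite !symmetrize_1B; apply: symmetrize_le_affine => s; case: (dps s).
Qed.

End Symmetrize.

Section Exchangeable.
Context {R : realType} {d} {X : measurableType d} {n : nat}.
Variable mu : probability (n.-tuple X) R.
Hypothesis mu_exch : exchangeable mu.

Lemma measurable_perm_tuple (s : 'S_n) :
  measurable_fun [set: n.-tuple X] (perm_tuple s).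
Proof.
apply/measurable_fun_tnthP => i.
rewrite (_ : _ \o _ = (@tnth n X)^~ (s i)); first exact: measurable_tnth.
by apply/funext => x /=; rewrite tnth_perm_tuple.
Qed.

Local Open Scope ereal_scope.

Lemma integral_perm_tuple (f : n.-tuple X -> \bar R) (s : 'S_n) :
  measurable_fun setT f -> (forall x, 0 <= f x) ->
  \int[mu]_x f (perm_tuple s x) = \int[mu]_x f x.
Proof.
move=> mf f0.
have := ge0_integral_pushforward (measurable_perm_tuple s) mu measurableT mf
  (fun x _ => f0 x).
rewrite preimage_setT /= => <-.
apply: (eq_measure_integral mu) => [|mps A mA _].
  exact: measurable_perm_tuple.
exact: mu_exch.
Qed.

Lemma integral_symmetrize (phi : n.-tuple X -> R) :
  measurable_fun setT phi -> (forall x, (0 <= phi x)%R) ->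
  \int[mu]_x (symmetrize phi x)%:E = \int[mu]_x (phi x)%:E.
Proof.
move=> mphi phi0.
have mphiE : measurable_fun setT (EFin \o phi) by exact/measurable_EFinP.
have mphis (s : 'S_n) :
    measurable_fun setT (fun x => (phi (perm_tuple s x))%:E).
  exact: measurableT_comp mphiE (measurable_perm_tuple s).
under eq_integral do rewrite /symmetrize EFinM -sumEFin.
rewrite ge0_integralZl_EFin ?invr_ge0 ?ler0n //; last 2 first.
- by move=> x _; rewrite sume_ge0 // => s _; rewrite lee_fin.
- exact: emeasurable_sum.
rewrite ge0_integral_sum //; last by move=> s x _; rewrite lee_fin.
under eq_bigr do rewrite (integral_perm_tuple (EFin \o phi)) //.
(* [sumr_const] yields the generic [*+], [mule_natl] expects the convertible
   extended-real one. *)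
rewrite sumr_const card_Sn -[X in _ * X]/(\int[mu]_x (EFin \o phi) x *+ n`!).
by rewrite -mule_natl muleA -EFinM mulVf ?mul1e.
Qed.

End Exchangeable.

Lemma g_sigma_nonseparating (T : Type) (G : set (set T)) (p q : T) :
  (forall A, G A -> A p <-> A q) -> forall A, <<s G >> A -> A p <-> A q.
Proof.
move=> Gpq; apply: smallest_sub => //; split.
- by split=> -[].
- by move=> A Apq; split=> -[_ nA]; split=> // ?; apply/nA/Apq.
- by move=> F Fpq; split=> -[k _ /(Fpq k)]; exists k.
Qed.

Definition indist {d} {T : measurableType d} (p q : T) : Prop :=
  forall B, measurable B -> B p <-> B q.

Section Indistinguishable.
Context {d} {T : measurableType d}.
Implicit Types p q r : T.

Lemma indist_sym p q : indist p q -> indist q p.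
Proof. by move=> pq B mB; symmetry; exact: pq. Qed.

Lemma indist_trans p q r : indist p q -> indist q r -> indist p r.
Proof.
by move=> pq qr B mB; split=> [/(pq B mB)/(qr B mB)|/(qr B mB)/(pq B mB)].
Qed.

Lemma measurable_fun_indist {d'} {U : measurableType d'} {f : T -> U} :
  measurable_fun setT f -> {homo f : p q / indist p q}.
Proof.
by move=> mf p q pq B mB; have := pq _ (mf measurableT B mB); rewrite setTI.
Qed.

Lemma indist_tuple n (y y' : n.-tuple T) :
  (forall i, indist (tnth y i) (tnth y' i)) -> indist y y'.
Proof.
move=> yy'; apply: g_sigma_nonseparating.
apply: (big_ind (fun G => forall A, G A -> A y <-> A y'))
  => // [G G' GP G'P A|i _ A].
  by case; [exact: GP|exact: G'P].
by case=> B mB <-; split=> -[_ /(yy' i B mB)].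
Qed.

Lemma indist_separator (L : seq T) p0 :
  exists C, [/\ measurable C, C p0 & {in L, forall p, C p -> indist p p0}].
Proof.
elim: L => [|q L [C [mC Cp0 CL]]]; first by exists setT.
have [qp0|nqp0] := pselect (indist q p0).
  by exists C; split=> // p; rewrite inE => /predU1P[-> _ // | pL]; exact: CL.
have [B [mB Bp0 nBq]] : exists B, [/\ measurable B, B p0 & ~ B q].
  move/existsNP: nqp0 => [B /not_implyP[mB nBqp0]].
  have [Bp0|nBp0] := pselect (B p0).
    by exists B; split=> // Bq; apply: nBqp0.
  exists (~` B); split=> //; first exact: measurableC.
  by move=> nBq; apply: nBqp0; split=> [/nBq|/nBp0].
exists (C `&` B); split=> //; first exact: measurableI.
by move=> p; rewrite inE => /predU1P[-> []//|pL [Cp _]]; exact: CL.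
Qed.

End Indistinguishable.

Lemma indist_real_eq (R : realType) (a b : R) : indist a b -> a = b.
Proof. by move=> ab; apply/esym/(ab _ (measurable_set1 a)). Qed.

Section PermUpToEquivalence.
Context {T : eqType} {e : rel T}.
Hypotheses (e_refl : reflexive e) (e_sym : symmetric e).
Hypothesis e_trans : transitive e.

Lemma tuple_perm_rel n (x x' : n.-tuple T) :
  {in x ++ x', forall p, count (e p) x = count (e p) x'} ->
  exists s : 'S_n, forall i, e (tnth x (s i)) (tnth x' i).
Proof.
move=> cnt; set L := x ++ x'.
pose rep p := nth p L (find (e p) L).
have has_e p : p \in L -> has (e p) L by move=> pL; apply/hasP; exists p.
have e_rep p : p \in L -> e p (rep p) by move=> /has_e; exact: nth_find.
have rep_eq : {in L &, forall p q, (rep p == rep q) = e p q}.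
  move=> p q pL qL; apply/eqP/idP => [pq|epq].
    by apply: e_trans (e_rep p pL) _; rewrite pq e_sym e_rep.
  rewrite /rep (eq_find (sym_left_transitive e_sym e_trans epq)).
  by apply: set_nth_default; rewrite -has_find has_e.
have perm_rep : perm_eq (map_tuple rep x') (map_tuple rep x).
  apply/allP => r; rewrite -map_cat => /mapP[p].
  rewrite mem_cat orbC -mem_cat => pL ->.
  have cnt_rep (y : seq T) : {subset y <= L} ->
      count (preim rep (pred1 (rep p))) y = count (e p) y.
    by move=> yL; apply: eq_in_count => q /yL qL; rewrite /= rep_eq // e_sym.
  rewrite /= !count_map !cnt_rep ?cnt // => q qy; rewrite mem_cat qy ?orbT //.
have [s /val_inj rep_s] := tuple_permP perm_rep.
exists s => i; move/(congr1 (fun y : n.-tuple T => tnth y i))/eqP: rep_s.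
by rewrite tnth_mktuple !tnth_map rep_eq ?mem_cat ?mem_tnth ?orbT // e_sym.
Qed.

End PermUpToEquivalence.

Lemma count_empirical {X : Type} {R : realType} n (x : n.-tuple X)
    (B : set X) :
  (0 < n)%N -> (count (mem B) x)%:R = n%:R * (empirical x B : R).
Proof.
move=> n_gt0; rewrite /empirical mulrA mulfV ?mul1r ?pnatr_eq0 -?lt0n //.
rewrite -(big_tuple _ _ x xpredT (fun p => \1_B p : R)).
elim: (tval x) => [|p y IHy]; first by rewrite big_nil.
by rewrite big_cons /= natrD IHy indicE.
Qed.

Lemma empirical_eq_perm {d} {X : measurableType d} {R : realType} {n}
    (x x' : n.-tuple X) : (0 < n)%N ->
  (forall B, measurable B -> (empirical x B : R) = empirical x' B) ->
  exists s : 'S_n, forall i, indist (tnth x (s i)) (tnth x' i).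
Proof.
move=> n_gt0 emp; pose e p q := `[< @indist _ X p q >].
have e_refl : reflexive e by move=> p; apply/asboolP.
have e_sym : symmetric e.
  move=> p q; apply/idP/idP => /asboolP pq; apply/asboolP.
    exact: indist_sym.
  exact: indist_sym.
have e_trans : transitive e.
  move=> q p r /asboolP pq /asboolP qr; apply/asboolP.
  exact: indist_trans pq qr.
have cnt_e : {in x ++ x', forall p, count (e p) x = count (e p) x'}.
  move=> p0 _; have [C [mC Cp0 CL]] := indist_separator (x ++ x') p0.
  have cntC (y : seq X) :
      {subset y <= x ++ x'} -> count (e p0) y = count (mem C) y.
    move=> yL; apply: eq_in_count => q /yL qL.
    apply/asboolP/idP => [p0q|/set_mem Cq].
      by apply/mem_set/(p0q C mC).
    by apply: indist_sym; exact: CL.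
  rewrite !cntC => [|q qx|q qx]; rewrite ?mem_cat ?qx ?orbT //.
  by apply/eqP; rewrite -(eqr_nat R) !count_empirical // emp.
have [s xs] := tuple_perm_rel e_refl e_sym e_trans _ _ _ cnt_e.
by exists s => i; have /asboolP := xs i.
Qed.

Section SymmetrizeMeasurable.
Context {d} {X : measurableType d} {R : realType} {n : nat}.
Variable phi : n.-tuple X -> R.
Hypothesis mphi : measurable_fun setT phi.

Lemma symmetrize_indist (y y' : n.-tuple X) :
  (forall i, indist (tnth y i) (tnth y' i)) ->
  symmetrize phi y = symmetrize phi y'.
Proof.
move=> yy'; rewrite /symmetrize; congr (_ * _); apply: eq_bigr => s _.
apply: indist_real_eq; apply: (measurable_fun_indist mphi).
apply: indist_tuple => i.
by rewrite !tnth_perm_tuple.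
Qed.

Lemma symmetrize_empirical (x x' : n.-tuple X) : (0 < n)%N ->
  (forall B, measurable B -> (empirical x B : R) = empirical x' B) ->
  symmetrize phi x = symmetrize phi x'.
Proof.
move=> n_gt0 emp; have [s xs] := empirical_eq_perm x x' n_gt0 emp.
rewrite -(symmetrize_perm_tuple phi s x); apply: symmetrize_indist => i.
by rewrite tnth_perm_tuple.
Qed.

End SymmetrizeMeasurable.

Theorem theorem1 (R : realType) (eps delta : R) (n : nat)
  (d : measure_display) (X : measurableType d)
  (I : Type) (mu : I -> probability (n.-tuple X) R)
  (phi : n.-tuple X -> R) :
  0 < eps -> 0 <= delta -> (1 <= n)%N ->
  (forall i, exchangeable (mu i)) ->
  measurable_fun setT phi ->
  (forall x, 0 <= phi x <= 1) ->
  dp_condition eps delta phi ->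
  [/\ (forall x, 0 <= symmetrize phi x <= 1),
      dp_condition eps delta (symmetrize phi),
      (forall i, (\int[mu i]_x (symmetrize phi x)%:E
                  = \int[mu i]_x (phi x)%:E)%E) &
      (forall x x' : n.-tuple X,
         (forall B : set X, measurable B ->
            (empirical x B : R) = empirical x' B) ->
         symmetrize phi x = symmetrize phi x')].
Proof.
move=> _ _ n_gt0 mu_exch mphi phi01 dp; split.
- exact: symmetrize_in01.
- exact: dp_condition_symmetrize.
- move=> i; apply: integral_symmetrize => // x.
  by case/andP: (phi01 x).
- by move=> x x'; exact: symmetrize_empirical.
Qed.
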